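(* For every $n\geq 2$, $\deg(\mathrm{nib}:\{0,1\}^n\to\{0,1\}^n)=3/2$.
   Context: For finite sets $X,Y$ and $f:X\to Y$, $\deg(f)=\frac{1}{|X|}\sum_{y\in Y}|f^{-1}(y)|^2$. For a binary word $w\in\{0,1\}^n$, $\mathrm{nib}(w)$ is obtained from $w$ by replacing the first (leftmost) occurrence of the factor $10$ in $w$ with $01$; if $w$ contains no factor $10$, then $\mathrm{nib}(w)=w$. *)

From mathcomp Require Import all_boot all_order all_algebra.
Set Implicit Arguments. Unset Strict Implicit. Unset Printing Implicit Defensive.
Import Order.TTheory GRing.Theory Num.Theory.

Definition deg (X Y : finType) (f : X -> Y) : rat :=
  ((\sum_(y : Y) (#|[set x | f x == y]| ^ 2)%N)%:R / #|X|%:R)%R.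

(* nib on binary words (true = 1, false = 0): replace the leftmost factor 10
   by 01; identity if there is no factor 10. *)
Fixpoint nib_seq (w : seq bool) : seq bool :=
  match w with
  | true :: false :: t => false :: true :: t
  | b :: t => b :: nib_seq t
  | [::] => [::]
  end.

Lemma size_nib_seq (w : seq bool) : size (nib_seq w) = size w.
Proof.
elim: w => [|[|] t IH] //=; case: t IH => [|[|] t'] //= IH; by rewrite IH.
Qed.

Definition nib (n : nat) (w : n.-tuple bool) : n.-tuple bool :=
  Tuple (introT eqP (etrans (size_nib_seq w) (size_tuple w))).

From mathcomp Require Import all_boot all_order all_algebra zify.
Import Order.TTheory GRing.Theory Num.Theory.
Set Implicit Arguments.
Unset Strict Implicit.

(* The fibre of nib over a word y is computed from the first letters of y:
   the preimages of 0y' are the words 0x with nib x = y', together with 10t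
   when y' = 1t; a word 1y' has only preimages starting with 1, and at most
   one of them.  Summing the squares of these fibre sizes over all words of
   length m gives a linear recursion with solution 3 * 2^(m-1) for m >= 2,
   against 2^m words: the degree is 3/2. *)

Fixpoint words (n : nat) : seq (seq bool) :=
  if n is m.+1 then map (cons false) (words m) ++ map (cons true) (words m)
  else [:: [::]].

Lemma mem_words n s : (s \in words n) = (size s == n).
Proof.
elim: n s => [|n IH] [|b s] //=; rewrite mem_cat.
- by apply/negbTE; rewrite negb_or; apply/andP; split; apply/mapP => -[].
- have cons_inj (c : bool) : injective (cons c) by move=> ? ? [].
  case: b; rewrite (mem_map (cons_inj _)) IH eqSS.
    by have /negbTE-> : true :: s \notin map (cons false) (words n)
      by apply/mapP => -[].
  have /negbTE-> : false :: s \notin map (cons true) (words n)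
    by apply/mapP => -[].
  by rewrite orbF.
Qed.

Lemma words_uniq n : uniq (words n).
Proof.
elim: n => //= n IH; rewrite cat_uniq !map_inj_uniq ?IH ?andbT //=; try by move=> ? ? [].
by apply/hasPn => _ /mapP [s _ ->]; apply/mapP => -[].
Qed.

Lemma size_words n : size (words n) = 2 ^ n.
Proof. by elim: n => //= n IH; rewrite size_cat !size_map IH expnS mul2n addnn. Qed.

Lemma count_words_cons (P : pred (seq bool)) n :
  count P (words n.+1) =
  count (fun x => P (false :: x)) (words n) + count (fun x => P (true :: x)) (words n).
Proof. by rewrite count_cat !count_map. Qed.

Lemma big_words_cons (R : Type) (idx : R) (op : Monoid.law idx) (F : seq bool -> R) n :
  \big[op/idx]_(s <- words n.+1) F s =
  op (\big[op/idx]_(s <- words n) F (false :: s))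
     (\big[op/idx]_(s <- words n) F (true :: s)).
Proof. by rewrite big_cat !big_map. Qed.

Lemma count_words_eq (y : seq bool) : count (pred1 y) (words (size y)) = 1.
Proof. by rewrite (count_uniq_mem _ (words_uniq _)) mem_words eqxx. Qed.

Lemma big_tuple_words (R : Type) (idx : R) (op : Monoid.com_law idx) n
    (P : pred (seq bool)) (F : seq bool -> R) :
  \big[op/idx]_(x : n.-tuple bool | P x) F x = \big[op/idx]_(s <- words n | P s) F s.
Proof.
transitivity (\big[op/idx]_(s <- map val (index_enum {: n.-tuple bool}) | P s) F s).
  by rewrite big_map.
apply/perm_big/uniq_perm.
- by rewrite map_inj_uniq ?index_enum_uniq //; apply: val_inj.
- exact: words_uniq.
move=> s; rewrite mem_words; apply/mapP/eqP => [[t _ ->]|Hs].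
  exact: size_tuple.
by exists (Tuple (introT eqP Hs)); rewrite ?mem_index_enum.
Qed.

Fixpoint nib_fibre1 (y : seq bool) : nat :=
  match y with
  | [::] => 1
  | true :: t => nib_fibre1 t
  | false :: t => head false t
  end.

Fixpoint nib_fibre (y : seq bool) : nat :=
  match y with
  | [::] => 1
  | false :: t => nib_fibre t + head false t
  | true :: t => nib_fibre1 t
  end.

Lemma nib_fibre1_le1 y : nib_fibre1 y <= 1.
Proof. by elim: y => [|[] [|[] t] IH] //=. Qed.

Lemma count_nib_true_false y :
  count (fun x => nib_seq (true :: x) == false :: y) (words (size y)) = head false y.
Proof.
case: y => [|c y] //=; rewrite count_words_cons.
rewrite [X in _ + X](eq_count (a2 := pred0)) ?count_pred0 ?addn0 //.
rewrite (eq_count (a2 := fun x => c && (x == y))); last first.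
  by move=> x /=; rewrite !eqseq_cons; case: c.
by case: c; [apply: count_words_eq | apply: count_pred0].
Qed.

Lemma count_nib_true y :
  count (fun x => nib_seq (true :: x) == true :: y) (words (size y)) = nib_fibre1 y.
Proof.
elim: y => [|c y IH] //=; rewrite count_words_cons.
rewrite (eq_count (a2 := pred0)) ?count_pred0 //=.
case: c; first by rewrite -IH; apply: eq_count => x; rewrite /= eqseq_cons.
by rewrite -count_nib_true_false; apply: eq_count => x; rewrite /= eqseq_cons.
Qed.

Lemma count_nib y : count (fun x => nib_seq x == y) (words (size y)) = nib_fibre y.
Proof.
elim: y => [|c y IH] //=; rewrite count_words_cons.
case: c => /=.
  by rewrite (eq_count (a2 := pred0)) ?count_pred0 ?count_nib_true.
by rewrite count_nib_true_false -IH.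
Qed.

Lemma card_nib_preim n (y : n.-tuple bool) : #|[set x | nib x == y]| = nib_fibre y.
Proof.
have -> : #|[set x | nib x == y]| = \sum_(x : n.-tuple bool | nib_seq x == y) 1.
  exact/esym/sum1dep_card.
rewrite (big_tuple_words _ _ (fun s => nib_seq s == y) (fun=> 1)) sum1_count.
by rewrite -count_nib size_tuple.
Qed.

Lemma sum_head_words n : \sum_(y <- words n.+1) head false y = 2 ^ n.
Proof. by rewrite big_words_cons /= big1 // add0n sum1_size size_words. Qed.

Lemma sum_nib_fibre1 n : \sum_(y <- words n.+1) nib_fibre1 y = 2 ^ n.
Proof.
elim: n => [|n IH]; first by rewrite unlock.
by rewrite big_words_cons /= sum_head_words IH expnS mul2n addnn.
Qed.

Lemma sum_nib_fibre_head n :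
  \sum_(y <- words n.+1) nib_fibre y * head false y = \sum_(y <- words n) nib_fibre1 y.
Proof.
rewrite big_words_cons /= big1 ?add0n => [|y _]; last by rewrite muln0.
by apply: eq_bigr => y _; rewrite muln1.
Qed.

Definition sum_nib_fibre_sq n := \sum_(y <- words n) nib_fibre y ^ 2.

Lemma sum_nib_fibre_sqS n :
  sum_nib_fibre_sq n.+1 = sum_nib_fibre_sq n
    + 2 * \sum_(y <- words n) nib_fibre y * head false y
    + \sum_(y <- words n) head false y + \sum_(y <- words n) nib_fibre1 y.
Proof.
rewrite /sum_nib_fibre_sq big_words_cons /=; congr (_ + _).
  rewrite big_distrr -!big_split; apply: eq_bigr => y _ /=.
  by case: (head false y); lia.
by apply: eq_bigr => y _; case: (nib_fibre1 y) (nib_fibre1_le1 y) => [|[]].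
Qed.

Lemma sum_nib_fibre_sq_closed n : sum_nib_fibre_sq n.+2 = 3 * 2 ^ n.+1.
Proof.
elim: n => [|n IH]; first by rewrite /sum_nib_fibre_sq unlock.
rewrite sum_nib_fibre_sqS IH sum_nib_fibre_head sum_head_words !sum_nib_fibre1.
by rewrite !expnS; lia.
Qed.

Theorem mainTheorem12 (n : nat) : (2 <= n)%N ->
  deg (@nib n) = (3%:R / 2%:R)%R.
Proof.
case: n => [|[|m]] // _.
rewrite /deg (eq_bigr (fun y : m.+2.-tuple bool => nib_fibre y ^ 2)); last first.
  by move=> y _; rewrite card_nib_preim.
rewrite (big_tuple_words _ _ predT (fun s => nib_fibre s ^ 2)) -/(sum_nib_fibre_sq _).
rewrite sum_nib_fibre_sq_closed card_tuple card_bool [in X in (_ / X)%R]expnS !natrM.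
have two_pow_neq0 : ((2 ^ m.+1)%:R != 0 :> rat)%R by rewrite pnatr_eq0 expn_eq0.
by rewrite invfM mulrACA divff // mulr1.
Qed.
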